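(* Let $h>0$ and $f\in H^\omega(X)\cap L_{\rfloor\cdot\lceil_h}(X)$. Then \[ \|f\|_{\mathcal B(X)}\le\|f-S_hf\|_{\mathcal B(X)}+\frac{\rfloor f\lceil_h}{\mu(B_h)}\le\frac{\|f\|_{H^\omega(X)}}{\mu(B_h)}\int_{B_h}\omega(\rho(u,\theta))\,d\mu(u)+\frac{\rfloor f\lceil_h}{\mu(B_h)}. \] This inequality is sharp: both inequalities become equalities for the function $f_{e,h}(x)=(\omega(h)-\omega(\rho(x,\theta)))_+$. Moreover $f_{e,h}\in H^\omega(X)\cap L_{\rfloor\cdot\lceil}(X)$ and $\rfloor f_{e,h}\lceil=\rfloor f_{e,h}\lceil_h$; consequently, for every $h>0$ and every $f\in H^\omega(X)\cap L_{\rfloor\cdot\lceil}(X)$, \[ \|f\|_{\mathcal B(X)}\le\frac{\|f\|_{H^\omega(X)}}{\mu(B_h)}\int_{B_h}\omega(\rho(u,\theta))\,d\mu(u)+\frac{\rfloor f\lceil}{\mu(B_h)}, \] and this inequality is sharp on the class $H^\omega(X)\cap L_{\rfloor\cdot\lceil}(X)$ (equality for $f_{e,h}$).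
   Context: Standing setting: $(X,\rho)$ is a metric space with a Borel measure $\mu$. $X$ is a commutative monoid, i.e. there is an associative and commutative binary operation $+$ on $X$ with a neutral element $\theta$. The measure is translation invariant: $\mu(x+Q)=\mu(Q)$ for every $\mu$-measurable $Q\subset X$ and every $x\in X$; correspondingly $\int_{B_h}g(x+u)\,d\mu(u)=\int_{x+B_h}g(u)\,d\mu(u)$ for locally integrable $g$. Moreover $\rho(x+y,x)\le\rho(y,\theta)$ for all $x,y\in X$. $B_h$ denotes the open ball of radius $h$ centered at $\theta$, and it is assumed that $0<\mu(B_h)<\infty$ and $B_h\neq\{\theta\}$ for every $h>0$. Every continuous real function on $X$ is integrable on every open ball. $L_{\mathrm{loc}}(X)$ is the space of functions $f\colon X\to\mathbb R$ integrable on every open ball. For $f\in L_{\mathrm{loc}}(X)$ and $h>0$: $\rfloor f\lceil_h=\sup_{x\in X}\left|\int_{x+B_h}f(u)\,d\mu(u)\right|$ and $\rfloor f\lceil=\sup_{h>0}\rfloor f\lceil_h$; $L_{\rfloor\cdot\lceil_h}(X)$ (resp. $L_{\rfloor\cdot\lceil}(X)$) is the set of $f\in L_{\mathrm{loc}}(X)$ with $\rfloor f\lceil_h<\infty$ (resp. $\rfloor f\lceil<\infty$). For a function $f$, $\|f\|_{\mathcal B(X)}=\sup_{x\in X}|f(x)|$. $\alpha_+=\max\{\alpha,0\}$. A modulus of continuity is a function $\omega\colon[0,\infty)\to[0,\infty)$ that is non-decreasing, semi-additive ($\omega(s+t)\le\omega(s)+\omega(t)$), with $\omega(0)=0$, and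 not identically zero (so $\omega(t)>0$ for $t>0$). $H^\omega(X)$ is the space of $f\colon X\to\mathbb R$ with $\|f\|_{H^\omega(X)}:=\sup_{x\neq y}\frac{|f(x)-f(y)|}{\omega(\rho(x,y))}<\infty$. For $h>0$ and $f\in L_{\mathrm{loc}}(X)$, $S_hf(x)=\frac{1}{\mu(B_h)}\int_{B_h}f(x+u)\,d\mu(u)$; as an operator $L_{\rfloor\cdot\lceil_h}(X)\to\mathcal B(X)$ its norm is $1/\mu(B_h)$. *)

From HB Require Import structures.
From mathcomp Require Import all_boot all_order all_algebra.
From mathcomp Require Import all_classical all_reals all_analysis.
Set Implicit Arguments. Unset Strict Implicit. Unset Printing Implicit Defensive.
Import Order.TTheory GRing.Theory Num.Theory.
Local Open Scope classical_set_scope.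
Local Open Scope ring_scope.

Section Defs.
Context {R : realType} {d : measure_display} {X : measurableType d}.
Variables (rho : X -> X -> R) (add : X -> X -> X) (theta : X)
  (mu : {measure set X -> \bar R}).

Definition rball (x : X) (r : R) : set X := [set y | rho x y < r].
Definition Bh (h : R) : set X := [set u | rho u theta < h].
Definition transl (x : X) (Q : set X) : set X := [set add x u | u in Q].

Definition ropen (A : set X) : Prop :=
  forall x, A x -> exists r : R, 0 < r /\ rball x r `<=` A.
Definition rcontinuous (g : X -> R) : Prop :=
  forall x (e : R), 0 < e -> exists del : R, 0 < del /\
    forall y, rho x y < del -> `|g x - g y| < e.

Definition Lloc (f : X -> R) : Prop :=
  forall x (r : R), 0 < r -> mu.-integrable (rball x r) (EFin \o f).

Definition standing_setting : Prop :=
      ((forall x y, 0 <= rho x y) /\ (forall x y, rho x y = 0 <-> x = y) /\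
      (forall x y, rho x y = rho y x) /\
      (forall x y z, rho x z <= rho x y + rho y z)) /\
      (* Borel measure: every open set is measurable *)
      (forall A, ropen A -> measurable A) /\
      (forall x y z, add x (add y z) = add (add x y) z) /\
      (forall x y, add x y = add y x) /\ (forall x, add theta x = x) /\
      (forall x Q, measurable Q -> measurable (transl x Q) /\
          mu (transl x Q) = mu Q) /\
      (forall (g : X -> R), Lloc g -> forall x (h : R), 0 < h ->
         (\int[mu]_(u in Bh h) (g (add x u))%:E =
          \int[mu]_(u in transl x (Bh h)) (g u)%:E)%E) /\
      (forall x y, rho (add x y) x <= rho y theta) /\
      (forall h : R, 0 < h -> (0 < mu (Bh h))%E /\ (mu (Bh h) < +oo)%E /\
          Bh h <> [set theta]) /\
      (forall g, rcontinuous g -> forall x (r : R), 0 < r ->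
          mu.-integrable (rball x r) (EFin \o g)).

Definition snorm_h (f : X -> R) (h : R) : \bar R :=
  ereal_sup [set (`| \int[mu]_(u in transl x (Bh h)) (f u)%:E |)%E | x in setT].
Definition snorm (f : X -> R) : \bar R :=
  ereal_sup [set snorm_h f h | h in [set h : R | 0 < h]].
Definition in_Lh (f : X -> R) (h : R) : Prop := Lloc f /\ (snorm_h f h < +oo)%E.
Definition in_L (f : X -> R) : Prop := Lloc f /\ (snorm f < +oo)%E.

Definition normB (f : X -> R) : \bar R := ereal_sup [set (`|f x|)%:E | x in setT].

Definition Sh (h : R) (f : X -> R) (x : X) : R :=
  fine (\int[mu]_(u in Bh h) (f (add x u))%:E) / fine (mu (Bh h)).

Variable omega : R -> R.
Definition modulus : Prop :=
  [/\ (forall t, 0 <= t -> 0 <= omega t),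
      (forall s t, 0 <= s -> s <= t -> omega s <= omega t),
      (forall s t, 0 <= s -> 0 <= t -> omega (s + t) <= omega s + omega t),
      omega 0 = 0 & exists t, 0 <= t /\ omega t <> 0].

Definition normH (f : X -> R) : \bar R :=
  ereal_sup [set z | exists x y, x <> y /\ z = (`|f x - f y| / omega (rho x y))%:E].
Definition in_H (f : X -> R) : Prop := (normH f < +oo)%E.

Definition Iomega (h : R) : \bar R := (\int[mu]_(u in Bh h) (omega (rho u theta))%:E)%E.

Definition fe (h : R) (x : X) : R := Num.max (omega h - omega (rho x theta)) 0.

End Defs.

From Pilot Require Import Defs.
From mathcomp Require Import all_boot all_order all_algebra.
From mathcomp Require Import all_classical all_reals all_analysis.
From mathcomp Require Import measurable_realfun.
From mathcomp Require Import ring lra.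
Import Order.TTheory GRing.Theory Num.Theory.
Set Implicit Arguments. Unset Strict Implicit. Unset Printing Implicit Defensive.
Local Open Scope classical_set_scope.
Local Open Scope ring_scope.

(* For x in X write x + B_h for the translated ball and m_h = mu(B_h).
   The upper bound rests on the pointwise splitting
     f(x) = (f(x) - S_h f(x)) + S_h f(x),  with  |S_h f(x)| <= ]f[_h / m_h,
   and on the deviation estimate
     |f(x) - S_h f(x)| <= m_h^-1 int_{B_h} |f(x) - f(x+u)| du
                       <= ||f||_{H^omega} m_h^-1 int_{B_h} omega(rho(u,theta)) du,
   which uses rho(x+u, x) <= rho(u, theta) and the monotonicity of omega.
   Sharpness is checked on f_{e,h} = (omega(h) - omega(rho(., theta)))_+:
   it is 1-Lipschitz w.r.t. omega (so ||f_{e,h}||_{H^omega} = 1, the value 1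
   being attained at theta and any other point of B_h), nonnegative, supported
   in B_h and maximal at theta; hence every quantity in the inequality can be
   computed in closed form: ||f_{e,h}||_B = omega(h),
   ||f_{e,h} - S_h f_{e,h}||_B = I_h / m_h and ]f_{e,h}[ = ]f_{e,h}[_h =
   omega(h) m_h - I_h, where I_h = int_{B_h} omega(rho(u, theta)) du. *)

(* A modulus of continuity is positive away from 0: if omega(t) = 0 for some
   t > 0, semi-additivity and monotonicity force omega to vanish identically. *)
Lemma modulus_gt0 (R : realType) (omega : R -> R) (t : R) :
  modulus omega -> 0 < t -> 0 < omega t.
Proof.
case=> o0 ond osa oz [t0 [t00 ot0]] tp.
rewrite lt_def o0 ?ltW// andbT; apply/eqP => ot.
have omega_tn n : omega (t *+ n) <= 0.
  elim: n => [|n IH]; first by rewrite mulr0n oz.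
  rewrite mulrS; apply: le_trans (osa _ _ (ltW tp) (mulrn_wge0 _ (ltW tp))) _.
  by rewrite ot add0r.
apply: ot0; apply/eqP; rewrite eq_le o0// andbT.
have [n t0_lt] : exists n, t0 < t *+ n.
  exists (Num.bound (t0 / t)).
  rewrite -mulr_natr -ltr_pdivrMl// mulrC; apply: archi_boundP.
  by rewrite divr_ge0// ltW.
exact: le_trans (ond _ _ t00 (ltW t0_lt)) (omega_tn n).
Qed.

Lemma dist_max0_le (R : realDomainType) (a b D : R) :
  a - D <= b -> b - D <= a -> `|Num.max a 0 - Num.max b 0| <= D.
Proof.
move=> ab ba; rewrite ler_distl.
have [a0|a0] := leP a 0; have [b0|b0] := leP b 0.
all: rewrite ?(max_r a0) ?(max_r b0) ?(max_l (ltW a0)) ?(max_l (ltW b0)).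
all: apply/andP; split; lra.
Qed.

(* Monotonicity of the integral of nonnegative functions, without any
   measurability assumption (integrands of the form u |-> f (x + u) are not
   known to be measurable, translation being an arbitrary map). *)
Lemma ge0_le_integral_nomeas d (T : measurableType d) (R : realType)
    (mu : {measure set T -> \bar R}) (D : set T) (f1 f2 : T -> \bar R) :
  (forall x, D x -> 0 <= f1 x)%E -> (forall x, D x -> f1 x <= f2 x)%E ->
  (\int[mu]_(x in D) f1 x <= \int[mu]_(x in D) f2 x)%E.
Proof.
move=> f10 f12; rewrite !ge0_integralE //; last first.
  by move=> x Dx; exact: le_trans (f10 x Dx) (f12 x Dx).
apply: ereal_sup_le => _ [g /= g_le <-]; exists g => // x.
apply: le_trans (g_le x) _; rewrite /patch; case: ifP => // /[1!inE] Dx.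
exact: f12.
Qed.

Section StandingSetting.
Context (R : realType) (d : measure_display) (X : measurableType d)
  (rho : X -> X -> R) (add : X -> X -> X) (theta : X)
  (mu : {measure set X -> \bar R}) (omega : R -> R).
Hypothesis Hset : standing_setting rho add theta mu.
Hypothesis Hom : modulus omega.

Let rho_ge0 x y : 0 <= rho x y.
Proof. by move: Hset => [[H _] _]; exact: H. Qed.
Let rho_eq0 x y : rho x y = 0 <-> x = y.
Proof. by move: Hset => [[_ [H _]] _]; exact: H. Qed.
Let rhoC x y : rho x y = rho y x.
Proof. by move: Hset => [[_ [_ [H _]]] _]; exact: H. Qed.
Let rho_tri x y z : rho x z <= rho x y + rho y z.
Proof. by move: Hset => [[_ [_ [_ H]]] _]; exact: H. Qed.
Let open_meas A : ropen rho A -> measurable A.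
Proof. by move: Hset => [_ [H _]]; exact: H. Qed.
Let add0 x : add theta x = x.
Proof. by move: Hset => [_ [_ [_ [_ [H _]]]]]; exact: H. Qed.
Let transl_meas x Q : measurable Q ->
  measurable (transl add x Q) /\ mu (transl add x Q) = mu Q.
Proof. by move: Hset => [_ [_ [_ [_ [_ [H _]]]]]]; exact: H. Qed.
Let integral_transl (g : X -> R) : Lloc rho mu g -> forall x (h : R), 0 < h ->
  (\int[mu]_(u in Bh rho theta h) (g (add x u))%:E =
   \int[mu]_(u in transl add x (Bh rho theta h)) (g u)%:E)%E.
Proof. by move: Hset => [_ [_ [_ [_ [_ [_ [H _]]]]]]]; exact: H. Qed.
Let rho_add x y : rho (add x y) x <= rho y theta.
Proof. by move: Hset => [_ [_ [_ [_ [_ [_ [_ [H _]]]]]]]]; exact: H. Qed.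
Let Bh_mu h : 0 < h -> (0 < mu (Bh rho theta h))%E /\
  (mu (Bh rho theta h) < +oo)%E /\ Bh rho theta h <> [set theta].
Proof. by move: Hset => [_ [_ [_ [_ [_ [_ [_ [_ [H _]]]]]]]]]; exact: H. Qed.
Let continuous_integrable g : rcontinuous rho g -> forall x (r : R), 0 < r ->
  mu.-integrable (rball rho x r) (EFin \o g).
Proof. by move: Hset => [_ [_ [_ [_ [_ [_ [_ [_ [_ H]]]]]]]]]; exact: H. Qed.

Let omega_ge0 t : 0 <= t -> 0 <= omega t.
Proof. by case: Hom => H _ _ _ _; exact: H. Qed.
Let omega_le s t : 0 <= s -> s <= t -> omega s <= omega t.
Proof. by case: Hom => _ H _ _ _; exact: H. Qed.
Let omega_add s t : 0 <= s -> 0 <= t -> omega (s + t) <= omega s + omega t.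
Proof. by case: Hom => _ _ H _ _; exact: H. Qed.
Let omega0 : omega 0 = 0.
Proof. by case: Hom => _ _ _ H _; exact: H. Qed.

Local Notation Bh := (Bh rho theta).
Local Notation T x h := (transl add x (Bh h)).
Local Notation m h := (fine (mu (Bh h))).
Local Notation I h := (fine (Iomega rho theta mu omega h)).

Let rho_xx x : rho x x = 0.
Proof. exact/rho_eq0. Qed.

Lemma rho_dist_pos x y : x <> y -> 0 < rho x y.
Proof. by move=> xy; rewrite lt_def rho_ge0 andbT; apply/eqP => /rho_eq0. Qed.

Lemma ropen_ball (x : X) (r : R) : ropen rho [set y | rho y x < r].
Proof.
move=> y /= yx; exists (r - rho y x); split; first by rewrite subr_gt0.
move=> z; rewrite /rball /= => yz.
by rewrite (le_lt_trans (rho_tri z y x))// [rho z y]rhoC -ltrBrDr.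
Qed.

Lemma Bh_meas h : measurable (Bh h).
Proof. by apply: open_meas; exact: ropen_ball. Qed.

Lemma rball_meas x h : measurable (rball rho x h).
Proof.
apply: open_meas; have -> : rball rho x h = [set y | rho y x < h].
  by apply/seteqP; split => y /=; rewrite /rball rhoC.
exact: ropen_ball.
Qed.

Lemma T_meas x h : measurable (T x h).
Proof. by have [] := @transl_meas x (Bh h) (Bh_meas h). Qed.

Lemma T_mu x h : mu (T x h) = mu (Bh h).
Proof. by have [] := @transl_meas x (Bh h) (Bh_meas h). Qed.

Lemma T_sub_rball x h : T x h `<=` rball rho x h.
Proof.
move=> _ [u /= uh <-]; rewrite /rball /= rhoC.
exact: le_lt_trans (rho_add x u) uh.
Qed.

Lemma T_theta h : T theta h = Bh h.
Proof.
apply/seteqP; split => u; first by move=> [v Bv <-]; rewrite add0.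
by move=> Bu; exists u => //; rewrite add0.
Qed.

Lemma Bh_nontrivial h : 0 < h -> exists u, Bh h u /\ u <> theta.
Proof.
move=> h0; apply: contrapT => noU; apply: (proj2 (proj2 (@Bh_mu h h0))).
apply/seteqP; split => u /=; last by move=> ->; rewrite /Bh /= rho_xx.
move=> Bu; apply: contrapT => ut; exact: noU (ex_intro _ u (conj Bu ut)).
Qed.

Lemma Bh_mu_fin h : 0 < h -> mu (Bh h) = (m h)%:E /\ 0 < m h.
Proof.
move=> h0; have [mu_gt0 [mu_fin _]] := @Bh_mu h h0.
have fin : mu (Bh h) \is a fin_num by rewrite ge0_fin_numE// ltW.
by split; [rewrite fineK | rewrite -lte_fin fineK].
Qed.

Lemma cst_Lloc c : Lloc rho mu (fun _ => c).
Proof.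
move=> x r r0; apply: continuous_integrable => // y e e0.
by exists 1; split => // z _; rewrite subrr normr0.
Qed.

Lemma Lloc_T f x h : 0 < h -> Lloc rho mu f -> mu.-integrable (T x h) (EFin \o f).
Proof.
move=> h0 Lf; apply: integrableS (Lf x h h0) => //.
- exact: rball_meas.
- exact: T_meas.
- exact: T_sub_rball.
Qed.

Lemma Lloc_Bh f h : 0 < h -> Lloc rho mu f -> mu.-integrable (Bh h) (EFin \o f).
Proof. by move=> h0 /(Lloc_T theta h0); rewrite T_theta. Qed.

Lemma Lloc_abs_sub f c : Lloc rho mu f -> Lloc rho mu (fun v => `|c - f v|).
Proof.
move=> Lf x r r0; have mB := rball_meas x r.
have := integrable_abse (integrableB mB (@cst_Lloc c x r r0) (Lf x r r0)).
by apply: eq_integrable => // v _.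
Qed.

Lemma rho_meas x : measurable_fun setT (fun v => rho v x).
Proof.
apply: (measurability (@RGenInftyO.G R)) => [|/= _ [_] [r] -> <-].
  exact: RGenInftyO.measurableE.
rewrite setTI; apply: open_meas.
have -> : (fun v => rho v x) @^-1` `]-oo, r[ = [set y | rho y x < r].
  by apply/seteqP; split => y /=; rewrite in_itv.
exact: ropen_ball.
Qed.

(* u |-> omega(rho(u, x)) is measurable, omega being monotone on [0, oo). *)
Lemma omega_rho_meas x : measurable_fun setT (fun v => omega (rho v x)).
Proof.
have -> : (fun v => omega (rho v x)) =
    (fun t => omega (Num.max t 0)) \o (fun v => rho v x).
  by apply/funext => v /=; rewrite max_l.
apply: measurableT_comp; last exact: rho_meas.
apply: nondecreasing_measurable => // s t st.
by apply: omega_le; [rewrite le_max lexx orbT | exact: (le_max2 st (lexx 0))].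
Qed.

Lemma omega_rho_integrable h : 0 < h ->
  mu.-integrable (Bh h) (EFin \o (fun u => omega (rho u theta))).
Proof.
move=> h0; apply: (le_integrable (Bh_meas h) _ _ (Lloc_Bh h0 (cst_Lloc (omega h)))).
  by apply/measurable_EFinP; apply: measurable_funTS; exact: omega_rho_meas.
move=> u Bu /=; rewrite lee_fin !ger0_norm ?omega_ge0 ?(ltW h0)//.
by apply: omega_le => //; exact: ltW.
Qed.

Lemma Iomega_fin h : 0 < h -> Iomega rho theta mu omega h = (I h)%:E.
Proof.
move=> h0; rewrite fineK//.
by have := integrable_fin_num (Bh_meas h) (omega_rho_integrable h0).
Qed.

Lemma I_ge0 h : 0 < h -> 0 <= I h.
Proof.
move=> h0; rewrite -lee_fin -Iomega_fin //.
by apply: integral_ge0 => u _; rewrite lee_fin omega_ge0.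
Qed.

Lemma Sh_transl f x h : 0 < h -> Lloc rho mu f ->
  Sh rho add theta mu h f x = fine (\int[mu]_(u in T x h) (f u)%:E)%E / m h.
Proof. by move=> h0 Lf; rewrite /Sh integral_transl. Qed.

Lemma Sh_le_snorm_h f x h : 0 < h -> Lloc rho mu f ->
  (`|Sh rho add theta mu h f x|%:E <=
   snorm_h rho add theta mu f h * ((m h)^-1)%:E)%E.
Proof.
move=> h0 Lf; have [_ m0] := Bh_mu_fin h0.
have Jfin := integrable_fin_num (T_meas x h) (Lloc_T x h0 Lf).
rewrite Sh_transl // normrM normfV (ger0_norm (ltW m0)) EFinM.
apply: lee_wpmul2r; first by rewrite lee_fin invr_ge0 ltW.
by rewrite -abse_EFin fineK //; apply: ereal_sup_ubound; exists x.
Qed.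

Lemma mean_deviation_le f x h c : 0 < h -> Lloc rho mu f ->
  (`|c * m h - fine (\int[mu]_(u in T x h) (f u)%:E)|%:E <=
   \int[mu]_(u in Bh h) (`|c - f (add x u)|)%:E)%E.
Proof.
move=> h0 Lf; have [mE _] := Bh_mu_fin h0.
have iT := Lloc_T x h0 Lf; have mT := T_meas x h.
set J := (\int[mu]_(u in T x h) (f u)%:E)%E.
have Jfin : J \is a fin_num by have := integrable_fin_num mT iT.
have int_cf : (\int[mu]_(u in T x h) ((c - f u)%:E) = (c * m h - fine J)%:E)%E.
  under eq_integral do rewrite EFinB.
  rewrite integralB_EFin //; last exact: (Lloc_T x h0 (cst_Lloc c)).
  by rewrite integral_cst // T_mu [in LHS]mE EFinB EFinM (fineK Jfin).
rewrite (@integral_transl _ (Lloc_abs_sub c Lf) x h h0).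
rewrite -abse_EFin -int_cf.
under [X in (_ <= X)%E]eq_integral do rewrite -abse_EFin.
apply: le_abse_integral => //; apply/measurable_EFinP.
apply: measurable_funB; first exact: measurable_cst.
by apply/measurable_EFinP; case/integrableP: iT.
Qed.

Lemma Sh_deviation_le f h x N : 0 < h -> Lloc rho mu f -> 0 <= N ->
  (forall y z, `|f y - f z| <= N * omega (rho y z)) ->
  `|f x - Sh rho add theta mu h f x| <= N * I h / m h.
Proof.
move=> h0 Lf N0 f_lip; have [_ m0] := Bh_mu_fin h0.
have int_lip : (\int[mu]_(u in Bh h) (`|f x - f (add x u)|)%:E <=
                \int[mu]_(u in Bh h) (N * omega (rho u theta))%:E)%E.
  apply: ge0_le_integral_nomeas => u Bu; rewrite lee_fin //.
  apply: le_trans (f_lip x (add x u)) _; apply: ler_wpM2l => //.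
  by apply: omega_le => //; rewrite rhoC; exact: rho_add.
have int_omega : (\int[mu]_(u in Bh h) (N * omega (rho u theta))%:E =
                  (N * I h)%:E)%E.
  under eq_integral do rewrite EFinM.
  rewrite ge0_integralZl_EFin //; first by rewrite EFinM -(Iomega_fin h0).
  - exact: Bh_meas.
  - by move=> u _; rewrite lee_fin omega_ge0.
  - by apply/measurable_EFinP; apply: measurable_funTS; exact: omega_rho_meas.
set J := fine (\int[mu]_(u in T x h) (f u)%:E).
have dev : `|f x * m h - J| <= N * I h.
  rewrite -lee_fin -int_omega; apply: le_trans int_lip.
  exact: mean_deviation_le.
rewrite Sh_transl // -/J.
have -> : f x - J / m h = (f x * m h - J) / m h by field; rewrite gt_eqF.
by rewrite normrM normfV (ger0_norm (ltW m0)) ler_pM2r // invr_gt0.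
Qed.

Lemma normH_lipschitz f : in_H rho omega f -> exists N, normH rho omega f = N%:E /\
  0 <= N /\ forall y z, `|f y - f z| <= N * omega (rho y z).
Proof.
move=> fH; have [u [_ ut]] := Bh_nontrivial ltr01.
set z0 := `|f u - f theta| / omega (rho u theta).
have z0_le : (z0%:E <= normH rho omega f)%E.
  by apply: ereal_sup_ubound; exists u, theta.
have z0_ge0 : 0 <= z0 by rewrite divr_ge0 ?omega_ge0.
have fin : normH rho omega f \is a fin_num.
  rewrite fin_numE; apply/andP; split; last by rewrite lt_eqF.
  by apply/negP => /eqP E; move: z0_le; rewrite E leeNy_eq.
have N0 : 0 <= fine (normH rho omega f).
  by rewrite -lee_fin fineK // (le_trans _ z0_le).
exists (fine (normH rho omega f)); split; first by rewrite fineK.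
split => // y z; have [->|/eqP yz] := eqVneq y z.
  by rewrite subrr normr0 mulr_ge0 ?omega_ge0.
have omega_pos := modulus_gt0 Hom (rho_dist_pos yz).
rewrite -ler_pdivrMr // -lee_fin fineK //.
by apply: ereal_sup_ubound; exists y, z; split => //; apply/eqP.
Qed.

Lemma normB_le_deviation f h : 0 < h -> Lloc rho mu f ->
  (normB f <= normB (fun x => (f x - Sh rho add theta mu h f x)%R)
     + snorm_h rho add theta mu f h * ((m h)^-1)%:E)%E.
Proof.
move=> h0 Lf; apply: ge_ereal_sup => _ [x _ <-].
set s := Sh rho add theta mu h f x.
apply: (@le_trans _ _ ((`|f x - s| + `|s|)%:E)).
  by rewrite lee_fin; have := ler_normD (f x - s) s; rewrite subrK.
rewrite EFinD; apply: leeD; first by apply: ereal_sup_ubound; exists x.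
exact: Sh_le_snorm_h.
Qed.

Lemma normB_deviation_le f h : 0 < h -> in_H rho omega f -> Lloc rho mu f ->
  (normB (fun x => (f x - Sh rho add theta mu h f x)%R) <=
   normH rho omega f * ((m h)^-1)%:E * Iomega rho theta mu omega h)%E.
Proof.
move=> h0 fH Lf; have [N [-> [N0 f_lip]]] := normH_lipschitz fH.
rewrite Iomega_fin // -!EFinM.
apply: ge_ereal_sup => _ [x _ <-]; rewrite lee_fin mulrAC.
exact: Sh_deviation_le.
Qed.

(* The estimate in terms of ]f[ follows since ]f[_h <= ]f[. *)
Lemma normB_le_snorm f h : 0 < h -> in_H rho omega f -> in_L rho add theta mu f ->
  (normB f <= normH rho omega f * ((m h)^-1)%:E * Iomega rho theta mu omega h
     + snorm rho add theta mu f * ((m h)^-1)%:E)%E.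
Proof.
move=> h0 fH [Lf _]; have [_ m0] := Bh_mu_fin h0.
apply: le_trans (normB_le_deviation h0 Lf) _; apply: leeD.
  exact: normB_deviation_le.
apply: lee_wpmul2r; first by rewrite lee_fin invr_ge0 ltW.
by apply: ereal_sup_ubound; exists h.
Qed.

Local Notation fe h := (fe rho theta omega h).

Lemma fe_lipschitz h y z : `|fe h y - fe h z| <= omega (rho y z).
Proof.
have omega_tri a b : omega (rho a theta) <= omega (rho b theta) + omega (rho a b).
  rewrite addrC; apply: le_trans (@omega_add _ _ (rho_ge0 _ _) (rho_ge0 _ _)).
  by apply: omega_le => //; rewrite rhoC [rho b _]rhoC [rho _ theta]rhoC rho_tri.
apply: dist_max0_le; last by have := omega_tri y z; lra.
by have := omega_tri z y; rewrite [rho z y]rhoC; lra.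
Qed.

Lemma fe_ge0 h x : 0 <= fe h x.
Proof. by rewrite /Defs.fe le_max lexx orbT. Qed.

Lemma fe_le h x : 0 < h -> fe h x <= omega h.
Proof.
move=> h0; rewrite /Defs.fe ge_max omega_ge0 ?(ltW h0) // andbT.
by rewrite gerBl omega_ge0.
Qed.

Lemma fe_out h x : 0 < h -> ~ Bh h x -> fe h x = 0.
Proof.
move=> h0 nB; rewrite /Defs.fe max_r // subr_le0.
by apply: omega_le; [exact: ltW | rewrite leNgt; apply/negP].
Qed.

Lemma fe_in h x : Bh h x -> fe h x = omega h - omega (rho x theta).
Proof. by move=> Bx; rewrite /Defs.fe max_l // subr_ge0 omega_le // ltW. Qed.

Lemma fe_theta h : 0 < h -> fe h theta = omega h.
Proof.
by move=> h0; rewrite fe_in ?rho_xx ?omega0 ?subr0 // /Bh /= rho_xx.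
Qed.

Lemma fe_meas h : measurable_fun setT (fe h).
Proof.
apply: measurable_maxr; last exact: measurable_cst.
apply: measurable_funB; first exact: measurable_cst.
exact: omega_rho_meas.
Qed.

Lemma fe_Lloc h : 0 < h -> Lloc rho mu (fe h).
Proof.
move=> h0 x r r0.
apply: (le_integrable (rball_meas x r) _ _ (@cst_Lloc (omega h) x r r0)).
  by apply/measurable_EFinP; apply: measurable_funTS; exact: fe_meas.
move=> v _ /=; rewrite lee_fin !ger0_norm ?fe_le ?fe_ge0 //.
by rewrite omega_ge0 // ltW.
Qed.

Lemma normH_fe h : 0 < h -> normH rho omega (fe h) = 1%:E.
Proof.
move=> h0; apply/eqP; rewrite eq_le; apply/andP; split.
  apply: ge_ereal_sup => _ [x [y [xy ->]]]; rewrite lee_fin.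
  have omega_pos := modulus_gt0 Hom (rho_dist_pos xy).
  by rewrite ler_pdivrMr // mul1r fe_lipschitz.
have [u [Bu ut]] := Bh_nontrivial h0.
apply: ereal_sup_ubound; exists theta, u; split; first by move=> E; apply: ut.
have omega_pos := modulus_gt0 Hom (rho_dist_pos ut).
rewrite fe_theta // fe_in // [rho theta u]rhoC.
have -> : omega h - (omega h - omega (rho u theta)) = omega (rho u theta) by ring.
by rewrite ger0_norm ?divff // ?gt_eqF // ltW.
Qed.

Lemma integral_fe h : 0 < h ->
  (\int[mu]_(u in Bh h) (fe h u)%:E = (omega h * m h - I h)%:E)%E.
Proof.
move=> h0; have [mE _] := Bh_mu_fin h0.
rewrite (eq_integral (fun u => (omega h)%:E - (omega (rho u theta))%:E)%E); last first.
  by move=> u; rewrite inE => Bu; rewrite fe_in // EFinB.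
rewrite integralB_EFin //; last 3 first.
- exact: Bh_meas.
- exact: (Lloc_Bh h0 (cst_Lloc (omega h))).
- exact: omega_rho_integrable.
rewrite integral_cst; last exact: Bh_meas.
by rewrite [in LHS]mE EFinB EFinM -(Iomega_fin h0).
Qed.

(* Since f_{e,h} >= 0 vanishes outside B_h, its integral over any translated
   ball is at most its integral over B_h. *)
Lemma integral_fe_T_le h h' x : 0 < h ->
  (`|\int[mu]_(u in T x h') (fe h u)%:E| <= \int[mu]_(u in Bh h) (fe h u)%:E)%E.
Proof.
move=> h0; rewrite gee0_abs; last by apply: integral_ge0 => u _; rewrite lee_fin fe_ge0.
rewrite (eq_integral ((fun u => (fe h u)%:E) \_ (Bh h))); last first.
  move=> u _; rewrite /patch; case: ifPn => // /negP; rewrite inE => nB.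
  by rewrite fe_out.
rewrite -integral_mkcondr; apply: ge0_subset_integral.
- by apply: measurableI; [exact: T_meas | exact: Bh_meas].
- exact: Bh_meas.
- by apply/measurable_EFinP; apply: measurable_funTS; exact: fe_meas.
- by move=> u _; rewrite lee_fin fe_ge0.
- exact: subIsetr.
Qed.

Lemma snorm_h_fe h : 0 < h ->
  snorm_h rho add theta mu (fe h) h = (omega h * m h - I h)%:E.
Proof.
move=> h0; rewrite -integral_fe //; apply/eqP; rewrite eq_le; apply/andP; split.
  by apply: ge_ereal_sup => _ [x _ <-]; exact: integral_fe_T_le.
apply: ereal_sup_ubound; exists theta => //.
by rewrite T_theta gee0_abs //; apply: integral_ge0 => u _; rewrite lee_fin fe_ge0.
Qed.

Lemma snorm_fe h : 0 < h -> snorm rho add theta mu (fe h) = (omega h * m h - I h)%:E.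
Proof.
move=> h0; apply/eqP; rewrite eq_le; apply/andP; split.
  apply: ge_ereal_sup => _ [h' h'0 <-]; rewrite -integral_fe //.
  by apply: ge_ereal_sup => _ [x _ <-]; exact: integral_fe_T_le.
by apply: ereal_sup_ubound; exists h => //; rewrite snorm_h_fe.
Qed.

Lemma normB_fe h : 0 < h -> normB (fe h) = (omega h)%:E.
Proof.
move=> h0; apply/eqP; rewrite eq_le; apply/andP; split.
  apply: ge_ereal_sup => _ [x _ <-].
  by rewrite lee_fin ger0_norm ?fe_ge0 ?fe_le.
apply: ereal_sup_ubound; exists theta => //.
by rewrite fe_theta // ger0_norm // omega_ge0 // ltW.
Qed.

(* The deviation of f_{e,h} from its mean is maximal at theta. *)
Lemma normB_fe_deviation h : 0 < h ->
  normB (fun x => (fe h x - Sh rho add theta mu h (fe h) x)%R) = (I h / m h)%:E.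
Proof.
move=> h0; have [_ m0] := Bh_mu_fin h0.
apply/eqP; rewrite eq_le; apply/andP; split.
  apply: ge_ereal_sup => _ [x _ <-]; rewrite lee_fin -[I h]mul1r.
  apply: (Sh_deviation_le x h0 (fe_Lloc h0) ler01) => y z.
  by rewrite mul1r fe_lipschitz.
apply: ereal_sup_ubound; exists theta => //.
have -> : Sh rho add theta mu h (fe h) theta = (omega h * m h - I h) / m h.
  rewrite /Sh; under eq_integral do rewrite add0.
  by rewrite integral_fe.
rewrite fe_theta //.
have -> : omega h - (omega h * m h - I h) / m h = I h / m h.
  by field; rewrite gt_eqF.
by rewrite ger0_norm // divr_ge0 ?I_ge0 // ltW.
Qed.

End StandingSetting.

Theorem theorem2 (R : realType) (d : measure_display) (X : measurableType d)
  (rho : X -> X -> R) (add : X -> X -> X) (theta : X)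
  (mu : {measure set X -> \bar R}) (omega : R -> R)
  (Hset : standing_setting rho add theta mu) (Hom : modulus omega) :
  let inv h := ((fine (mu (Bh rho theta h)))^-1)%:E in
  (forall (h : R) (f : X -> R), 0 < h ->
     in_H rho omega f -> in_Lh rho add theta mu f h ->
     (normB f <= normB (fun x => (f x - Sh rho add theta mu h f x)%R)
                 + snorm_h rho add theta mu f h * inv h
      <= normH rho omega f * inv h * Iomega rho theta mu omega h
         + snorm_h rho add theta mu f h * inv h)%E) /\
  (forall h : R, 0 < h ->
     let g := fe rho theta omega h in
     (normB g = (normB (fun x => (g x - Sh rho add theta mu h g x)%R)
                    + snorm_h rho add theta mu g h * inv h)%E /\
         (normB (fun x => (g x - Sh rho add theta mu h g x)%R)
            + snorm_h rho add theta mu g h * inv h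
          = normH rho omega g * inv h * Iomega rho theta mu omega h
            + snorm_h rho add theta mu g h * inv h)%E /\
         (in_H rho omega g /\ in_L rho add theta mu g) /\
         snorm rho add theta mu g = snorm_h rho add theta mu g h /\
         (forall f : X -> R, in_H rho omega f -> in_L rho add theta mu f ->
            (normB f <= normH rho omega f * inv h * Iomega rho theta mu omega h
                        + snorm rho add theta mu f * inv h)%E) /\
         normB g = (normH rho omega g * inv h * Iomega rho theta mu omega h
                    + snorm rho add theta mu g * inv h)%E)).
Proof.
move=> inv; split => [h f h0 fH [Lf _] | h h0 g].
  apply/andP; split; first exact: (normB_le_deviation Hset h0 Lf).
  by apply: leeD2r; exact: (normB_deviation_le Hset Hom h0 fH Lf).
rewrite /g /inv; have [_ m0] := Bh_mu_fin Hset h0.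
have snorm_eq : snorm rho add theta mu (fe rho theta omega h) =
                snorm_h rho add theta mu (fe rho theta omega h) h.
  by rewrite (snorm_fe Hset Hom h0) (snorm_h_fe Hset Hom h0).
rewrite snorm_eq; split; [|split; [|split; [|split; [|split]]]] => //.
- rewrite (normB_fe Hset Hom h0) (normB_fe_deviation Hset Hom h0).
  rewrite (snorm_h_fe Hset Hom h0) -EFinM -EFinD.
  by congr EFin; field; rewrite gt_eqF.
- rewrite (normB_fe_deviation Hset Hom h0) (normH_fe Hset Hom h0).
  by rewrite (Iomega_fin Hset Hom h0) -!EFinM mul1r mulrC.
- split; first by rewrite /in_H (normH_fe Hset Hom h0) ltry.
  split; first exact: (fe_Lloc Hset Hom h0).
  by rewrite snorm_eq (snorm_h_fe Hset Hom h0) ltry.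
- by move=> f fH fL; exact: (normB_le_snorm Hset Hom h0 fH fL).
- rewrite (normB_fe Hset Hom h0) (normH_fe Hset Hom h0) (Iomega_fin Hset Hom h0).
  rewrite (snorm_h_fe Hset Hom h0) -!EFinM -EFinD.
  by congr EFin; field; rewrite gt_eqF.
Qed.
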